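(* If $\cos\theta_{\max}>0$, then for every $f\in\mathcal H$ there exists a consistent reconstruction of $f$ (a solution $\hat f$ of $S^\perp T^\perp\hat f=0$, $S\hat f=Sf$); the normal (minimal-norm) consistent reconstruction $\hat f_n$ is unique and satisfies $$\|\hat f_n\|^2\le\|Sf\|^2+\frac{\|S^\perp T^\perp Sf\|^2}{\cos^4\theta_{\max}}.$$
   Context: $\mathcal H$ is a Hilbert space; $\mathcal S,\mathcal T\subseteq\mathcal H$ closed subspaces with orthogonal projectors $S,T$; $S^\perp=I-S$, $T^\perp=I-T$. A consistent reconstruction of $f$ is any $\hat f$ with $S^\perp T^\perp\hat f=0$ and $S\hat f=Sf$. Angles: for closed subspaces $\mathcal F,\mathcal G$ with orthogonal projectors $P_{\mathcal F},P_{\mathcal G}$, $\hat\Theta(\mathcal F,\mathcal G)=\{\arccos\sigma:\ \sigma\ge0,\ \sigma^2\in\Sigma((P_{\mathcal F}P_{\mathcal G})|_{\mathcal F})\}$ ($\Sigma$ = spectrum), $\Theta(\mathcal F,\mathcal G)=\hat\Theta(\mathcal F,\mathcal G)\cap\hat\Theta(\mathcal G,\mathcal F)$, and $\theta_{\max}=\sup(\Theta(\mathcal S,\mathcal T)\setminus\{\pi/2\})$ with $\sup\emptyset=0$. *)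

From Stdlib Require Import Reals.
Open Scope R_scope.

Record HilbertSpace := {
  hcar :> Type;
  hzero : hcar;
  hadd : hcar -> hcar -> hcar;
  hopp : hcar -> hcar;
  hscal : R -> hcar -> hcar;
  hinner : hcar -> hcar -> R;
  hadd_assoc : forall x y z, hadd x (hadd y z) = hadd (hadd x y) z;
  hadd_comm : forall x y, hadd x y = hadd y x;
  hadd_0 : forall x, hadd x hzero = x;
  hadd_opp : forall x, hadd x (hopp x) = hzero;
  hscal_1 : forall x, hscal 1 x = x;
  hscal_assoc : forall a b x, hscal a (hscal b x) = hscal (a * b) x;
  hscal_distr_l : forall a x y, hscal a (hadd x y) = hadd (hscal a x) (hscal a y);
  hscal_distr_r : forall a b x, hscal (a + b) x = hadd (hscal a x) (hscal b x);
  hinner_sym : forall x y, hinner x y = hinner y x;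
  hinner_add : forall x y z, hinner (hadd x y) z = hinner x z + hinner y z;
  hinner_scal : forall a x y, hinner (hscal a x) y = a * hinner x y;
  hinner_pos : forall x, 0 <= hinner x x;
  hinner_def : forall x, hinner x x = 0 -> x = hzero;
  hcomplete : forall u : nat -> hcar,
    (forall eps, 0 < eps -> exists N, forall m n, (N <= m)%nat -> (N <= n)%nat ->
        sqrt (hinner (hadd (u m) (hopp (u n))) (hadd (u m) (hopp (u n)))) < eps) ->
    exists l, forall eps, 0 < eps -> exists N, forall n, (N <= n)%nat ->
        sqrt (hinner (hadd (u n) (hopp l)) (hadd (u n) (hopp l))) < eps
}.

Arguments hzero {h}.
Arguments hadd {h}.
Arguments hopp {h}.
Arguments hscal {h}.
Arguments hinner {h}.

Definition hsub {H : HilbertSpace} (x y : H) : H := hadd x (hopp y).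
Definition hnorm {H : HilbertSpace} (x : H) : R := sqrt (hinner x x).

Definition closed_subspace {H : HilbertSpace} (M : H -> Prop) : Prop :=
  M hzero /\
  (forall x y, M x -> M y -> M (hadd x y)) /\
  (forall a x, M x -> M (hscal a x)) /\
  (forall (u : nat -> H) (l : H), (forall n, M (u n)) ->
     (forall eps, 0 < eps -> exists N, forall n, (N <= n)%nat -> hnorm (hsub (u n) l) < eps) ->
     M l).

Definition orth_projector {H : HilbertSpace} (M : H -> Prop) (P : H -> H) : Prop :=
  forall x, M (P x) /\ forall y, M y -> hinner (hsub x (P x)) y = 0.

Definition compl {H : HilbertSpace} (P : H -> H) : H -> H := fun x => hsub x (P x).

Definition invertible_on {H : HilbertSpace} (F : H -> Prop) (B : H -> H) : Prop :=
  exists C : H -> H,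
    (forall y, F y -> F (C y)) /\
    (forall x, F x -> C (B x) = x) /\
    (forall y, F y -> B (C y) = y) /\
    (exists K, forall y, F y -> hnorm (C y) <= K * hnorm y).

Definition in_spectrum_on {H : HilbertSpace} (F : H -> Prop) (A : H -> H) (lam : R) : Prop :=
  ~ invertible_on F (fun x => hsub (A x) (hscal lam x)).

Definition Theta_hat {H : HilbertSpace} (F : H -> Prop) (PF PG : H -> H) (theta : R) : Prop :=
  exists sigma, 0 <= sigma /\ in_spectrum_on F (fun x => PF (PG x)) (sigma ^ 2)
                /\ theta = acos sigma.

Definition Theta {H : HilbertSpace} (F G : H -> Prop) (PF PG : H -> H) (theta : R) : Prop :=
  Theta_hat F PF PG theta /\ Theta_hat G PG PF theta.

(** theta_max = sup (Theta(S,T) \ {pi/2}), with sup of the empty set = 0. *)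
Definition is_theta_max {H : HilbertSpace} (Ssp Tsp : H -> Prop) (S T : H -> H) (tm : R) : Prop :=
  let A := fun theta => Theta Ssp Tsp S T theta /\ theta <> PI / 2 in
  ((forall theta, ~ A theta) /\ tm = 0) \/
  ((exists theta, A theta) /\ is_lub A tm).

Definition consistent {H : HilbertSpace} (S T : H -> H) (f fh : H) : Prop :=
  compl S (compl T fh) = hzero /\ S fh = S f.

Definition normal_consistent {H : HilbertSpace} (S T : H -> H) (f fh : H) : Prop :=
  consistent S T f fh /\ forall g, consistent S T f g -> hnorm fh <= hnorm g.

(* Let [A] be the compression of [T] to [S] and [k := cos tmax ^ 2].  A positive approximate
   eigenvalue [lam] of [A] is also one of the compression of [S] to [T], so [acos (sqrt lam)] is a
   principal angle and [lam >= k].  Hence the spectrum of [A] lies in [{0} U [k, 1]], which is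
   used only through the quadratic-form inequality [k A <= A^2].  It makes the range of [A]
   closed, so [S f = n + A y] with [A n = 0], and [n + T y] is a consistent reconstruction.  The
   difference of two consistent reconstructions lies in [T] and is orthogonal to [S], hence to
   [n + T y], which is therefore the unique one of minimal norm.  Finally
   [|n + T y|^2 = |S f|^2 + |S^perp T y|^2] and [S^perp T^perp S f = - S^perp T (A y)], and
   [k A <= A^2] gives [k^2 |S^perp T y|^2 <= |S^perp T (A y)|^2]. *)

From Stdlib Require Import Reals Lra Lia Psatz Classical.
Open Scope R_scope.

Section InnerProduct.
Context {H : HilbertSpace}.
Implicit Types x y z : H.

Lemma inner_zero_l z : hinner hzero z = 0.
Proof.
  assert (E : hinner (hadd (@hzero H) hzero) z = hinner hzero z) by now rewrite hadd_0.
  rewrite hinner_add in E; lra.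
Qed.

Lemma inner_opp_l x z : hinner (hopp x) z = - hinner x z.
Proof.
  assert (E : hinner (hadd x (hopp x)) z = hinner hzero z) by now rewrite hadd_opp.
  rewrite hinner_add, inner_zero_l in E; lra.
Qed.

Lemma inner_sub_l x y z : hinner (hsub x y) z = hinner x z - hinner y z.
Proof. unfold hsub; rewrite hinner_add, inner_opp_l; ring. Qed.

Lemma inner_zero_r z : hinner z hzero = 0.
Proof. rewrite hinner_sym; apply inner_zero_l. Qed.

Lemma inner_add_r x y z : hinner z (hadd x y) = hinner z x + hinner z y.
Proof. rewrite !(hinner_sym _ z); apply hinner_add. Qed.

Lemma inner_scal_r a x z : hinner z (hscal a x) = a * hinner z x.
Proof. rewrite !(hinner_sym _ z); apply hinner_scal. Qed.

Lemma inner_opp_r x z : hinner z (hopp x) = - hinner z x.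
Proof. rewrite !(hinner_sym _ z); apply inner_opp_l. Qed.

Lemma inner_sub_r x y z : hinner z (hsub x y) = hinner z x - hinner z y.
Proof. rewrite !(hinner_sym _ z); apply inner_sub_l. Qed.

Lemma inner_ext x y : (forall z, hinner x z = hinner y z) -> x = y.
Proof.
  intros E.
  assert (D : hsub x y = hzero).
  { apply hinner_def; rewrite inner_sub_l, (E (hsub x y)); ring. }
  unfold hsub in D.
  rewrite <- (hadd_0 _ y), <- D, hadd_assoc, (hadd_comm _ y x), <- hadd_assoc, hadd_opp, hadd_0.
  reflexivity.
Qed.

End InnerProduct.

Ltac inner_simpl := repeat rewrite ?hinner_add, ?hinner_scal, ?inner_opp_l, ?inner_sub_l,
  ?inner_zero_l, ?inner_add_r, ?inner_scal_r, ?inner_opp_r, ?inner_sub_r, ?inner_zero_r.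

Ltac inner_simpl_in E := repeat rewrite ?hinner_add, ?hinner_scal, ?inner_opp_l, ?inner_sub_l,
  ?inner_zero_l, ?inner_add_r, ?inner_scal_r, ?inner_opp_r, ?inner_sub_r, ?inner_zero_r in E.

Ltac vec_ext := apply inner_ext; intro; inner_simpl; ring.

Lemma discriminant_le (a b c : R) :
  0 <= a -> (forall t, 0 <= a * t * t + 2 * b * t + c) -> b * b <= a * c.
Proof.
  intros Ha Hq.
  destruct (Req_dec a 0) as [Ha0|Ha0].
  - subst a. destruct (Req_dec b 0) as [Hb|Hb].
    + subst b. specialize (Hq 0). nra.
    + specialize (Hq (- (c + 1) / (2 * b))).
      replace (0 * (- (c + 1) / (2 * b)) * (- (c + 1) / (2 * b)) + 2 * b * (- (c + 1) / (2 * b)) + c)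
        with (-1) in Hq by (field; auto). lra.
  - specialize (Hq (- b / a)).
    replace (a * (- b / a) * (- b / a) + 2 * b * (- b / a) + c) with (c - b * b / a) in Hq
      by (field; auto).
    apply Rmult_le_reg_r with (/ a); [apply Rinv_0_lt_compat; lra|].
    replace (a * c * / a) with c by (field; lra). unfold Rdiv in Hq. lra.
Qed.

Section Norm.
Context {H : HilbertSpace}.
Implicit Types x y z : H.

Lemma cauchy_schwarz x y : hinner x y * hinner x y <= hinner x x * hinner y y.
Proof.
  rewrite (Rmult_comm (hinner x x)).
  apply discriminant_le; [apply hinner_pos|].
  intro t. pose proof (hinner_pos _ (hadd x (hscal t y))) as E.
  inner_simpl_in E. rewrite (hinner_sym _ y x) in E. nra.
Qed.

Lemma hnorm_sq x : hnorm x ^ 2 = hinner x x.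
Proof. apply pow2_sqrt, hinner_pos. Qed.

Lemma hnorm_nonneg x : 0 <= hnorm x.
Proof. apply sqrt_pos. Qed.

Lemma hnorm_le_of_sq x (c : R) : 0 <= c -> hinner x x <= c * c -> hnorm x <= c.
Proof.
  intros Hc Hx. rewrite <- (sqrt_pow2 c Hc). apply sqrt_le_1_alt. simpl. lra.
Qed.

Lemma hnorm_add_le x y : hnorm (hadd x y) <= hnorm x + hnorm y.
Proof.
  pose proof (hnorm_nonneg x); pose proof (hnorm_nonneg y).
  apply hnorm_le_of_sq; [lra|].
  pose proof (hnorm_sq x); pose proof (hnorm_sq y); pose proof (cauchy_schwarz x y).
  assert (hinner x y <= hnorm x * hnorm y).
  { destruct (Rle_dec (hinner x y) 0); [nra|].
    apply Rsqr_incr_0_var; unfold Rsqr; simpl in *; nra. }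
  inner_simpl. rewrite (hinner_sym _ y x). simpl in *. nra.
Qed.

Lemma hnorm_sub_le x y z : hnorm (hsub x z) <= hnorm (hsub x y) + hnorm (hsub y z).
Proof.
  replace (hsub x z) with (hadd (hsub x y) (hsub y z)) by vec_ext. apply hnorm_add_le.
Qed.

Lemma hnorm_subC x y : hnorm (hsub x y) = hnorm (hsub y x).
Proof. unfold hnorm; f_equal; inner_simpl; ring. Qed.

Lemma hnorm_scal a x : hnorm (hscal a x) = Rabs a * hnorm x.
Proof.
  unfold hnorm. inner_simpl.
  rewrite <- Rmult_assoc, sqrt_mult_alt by nra. f_equal. apply sqrt_Rsqr_abs.
Qed.

Lemma hnorm_sub_le_add x y : hnorm (hsub x y) <= hnorm x + hnorm y.
Proof.
  replace (hsub x y) with (hadd x (hscal (-1) y)) by vec_ext.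
  rewrite <- (Rmult_1_l (hnorm y)), <- (Rabs_R1), <- (Rabs_Ropp 1), <- hnorm_scal.
  apply hnorm_add_le.
Qed.

Lemma eq_of_hnorm_sub_le0 x y : hnorm (hsub x y) <= 0 -> x = y.
Proof.
  intro Hn.
  assert (E : hinner (hsub x y) (hsub x y) = 0).
  { rewrite <- hnorm_sq. pose proof (hnorm_nonneg (hsub x y)). simpl. nra. }
  apply hinner_def in E. apply inner_ext. intro z.
  assert (Ez : hinner (hsub x y) z = 0) by (rewrite E; apply inner_zero_l).
  rewrite inner_sub_l in Ez. lra.
Qed.

End Norm.

Section Projector.
Context {H : HilbertSpace} {M : H -> Prop} {P : H -> H}.
Hypothesis hP : orth_projector M P.
Implicit Types x y z : H.

Lemma proj_inner_range x y : M y -> hinner x y = hinner (P x) y.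
Proof.
  intros Hy. destruct (hP x) as [_ E]. specialize (E y Hy). rewrite inner_sub_l in E. lra.
Qed.

Lemma proj_sym x y : hinner (P x) y = hinner x (P y).
Proof.
  rewrite (proj_inner_range x (P y)) by apply (proj1 (hP y)).
  rewrite (hinner_sym _ (P x) y), (proj_inner_range y (P x)) by apply (proj1 (hP x)).
  apply hinner_sym.
Qed.

Lemma proj_add x y : P (hadd x y) = hadd (P x) (P y).
Proof. apply inner_ext; intro z. rewrite !proj_sym. inner_simpl. rewrite !proj_sym. ring. Qed.

Lemma proj_scal a x : P (hscal a x) = hscal a (P x).
Proof. apply inner_ext; intro z. rewrite !proj_sym. inner_simpl. rewrite !proj_sym. ring. Qed.

Lemma proj_sub x y : P (hsub x y) = hsub (P x) (P y).
Proof. apply inner_ext; intro z. rewrite !proj_sym. inner_simpl. rewrite !proj_sym. ring. Qed.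

Lemma proj_zero : P hzero = hzero.
Proof.
  replace (@hzero H) with (hscal 0 (@hzero H)) by vec_ext. rewrite proj_scal. vec_ext.
Qed.

Lemma proj_fix m : M m -> P m = m.
Proof.
  intros Hm. destruct (hP m) as [HPm Ho].
  assert (E : hinner (hsub m (P m)) (hsub m (P m)) = 0).
  { rewrite inner_sub_r, (Ho m Hm), (Ho (P m) HPm). ring. }
  apply hinner_def in E. symmetry. apply inner_ext. intro z.
  assert (Ez : hinner (hsub m (P m)) z = 0) by (rewrite E; apply inner_zero_l).
  rewrite inner_sub_l in Ez. lra.
Qed.

Lemma proj_idem x : P (P x) = P x.
Proof. apply proj_fix, hP. Qed.

Lemma proj_sq x : hinner (P x) (P x) = hinner (P x) x.
Proof. rewrite proj_sym, proj_idem. apply hinner_sym. Qed.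

Lemma proj_pythagoras x :
  hinner x x = hinner (P x) (P x) + hinner (hsub x (P x)) (hsub x (P x)).
Proof. pose proof (proj_sq x). inner_simpl. rewrite (hinner_sym _ x (P x)). lra. Qed.

Lemma proj_inner_le x : hinner (P x) (P x) <= hinner x x.
Proof. rewrite (proj_pythagoras x). pose proof (hinner_pos _ (hsub x (P x))). lra. Qed.

Lemma proj_hnorm_le x : hnorm (P x) <= hnorm x.
Proof. apply sqrt_le_1_alt, proj_inner_le. Qed.

End Projector.

Lemma pow_lt_eventually (q e : R) : 0 <= q < 1 -> 0 < e -> exists N, forall n, (N <= n)%nat -> q ^ n < e.
Proof.
  intros Hq He. destruct (pow_lt_1_zero q) with e as [N HN]; auto; [rewrite Rabs_pos_eq; lra|].
  exists N. intros n Hn. specialize (HN n Hn). rewrite Rabs_pos_eq in HN; auto. apply pow_le; lra.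
Qed.

Lemma le0_of_le_geometric (x K q : R) : 0 <= q < 1 -> (forall n, x <= K * q ^ n) -> x <= 0.
Proof.
  intros Hq Hx. apply Rle_plus_epsilon. intros e He.
  pose proof (Rabs_pos K).
  destruct (pow_lt_eventually q (e / (Rabs K + 1)) Hq) as [N HN];
    [apply Rdiv_lt_0_compat; lra|].
  specialize (HN N (Nat.le_refl N)). specialize (Hx N).
  assert (0 <= q ^ N) by (apply pow_le; lra).
  assert (K * q ^ N <= Rabs K * q ^ N) by (apply Rmult_le_compat_r; [lra | apply Rle_abs]).
  apply Rmult_lt_compat_l with (r := Rabs K + 1) in HN; [|lra].
  replace ((Rabs K + 1) * (e / (Rabs K + 1))) with e in HN by (field; lra).
  nra.
Qed.

Section GeometricLimits.
Context {H : HilbertSpace}.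
Variables (q : R).
Hypothesis hq : 0 <= q < 1.

Lemma geometric_tail (u : nat -> H) (C : R) :
  (forall n, hnorm (hsub (u n) (u (Datatypes.S n))) <= C * q ^ n) ->
  forall n j, hnorm (hsub (u n) (u (n + j)%nat)) <= C * (q ^ n - q ^ (n + j)) / (1 - q).
Proof.
  intros Hu n j. induction j.
  - rewrite Nat.add_0_r. replace (hsub (u n) (u n)) with (@hzero H) by vec_ext.
    unfold hnorm. rewrite inner_zero_l, sqrt_0. replace (q ^ n - q ^ n) with 0 by ring.
    unfold Rdiv. lra.
  - eapply Rle_trans; [apply (hnorm_sub_le _ (u (n + j)%nat))|].
    replace (n + Datatypes.S j)%nat with (Datatypes.S (n + j)) by lia.
    eapply Rle_trans; [apply Rplus_le_compat; [apply IHj | apply Hu]|].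
    right. simpl. field. lra.
Qed.

Lemma geometric_limit (u : nat -> H) (C : R) : 0 <= C ->
  (forall n, hnorm (hsub (u n) (u (Datatypes.S n))) <= C * q ^ n) ->
  exists l, forall n, hnorm (hsub (u n) l) <= C / (1 - q) * q ^ n.
Proof.
  intros HC Hu.
  assert (Hb : forall n m, (n <= m)%nat -> hnorm (hsub (u n) (u m)) <= C / (1 - q) * q ^ n).
  { intros n m Hnm. replace m with (n + (m - n))%nat by lia.
    eapply Rle_trans; [apply (geometric_tail u C Hu)|].
    assert (0 <= q ^ (n + (m - n))) by (apply pow_le; lra).
    apply Rmult_le_reg_r with (1 - q); [lra|].
    replace (C * (q ^ n - q ^ (n + (m - n))) / (1 - q) * (1 - q))
      with (C * (q ^ n - q ^ (n + (m - n)))) by (field; lra).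
    replace (C / (1 - q) * q ^ n * (1 - q)) with (C * q ^ n) by (field; lra).
    nra. }
  destruct (hcomplete H u) as [l Hl].
  { intros e He.
    destruct (pow_lt_eventually q (e * (1 - q) / (2 * C + 1)) hq) as [N HN];
      [apply Rdiv_lt_0_compat; nra|].
    exists N. intros m n Hm Hn.
    change (hnorm (hsub (u m) (u n)) < e).
    eapply Rle_lt_trans; [apply (hnorm_sub_le _ (u N))|].
    rewrite hnorm_subC.
    pose proof (Hb N m Hm). pose proof (Hb N n Hn).
    specialize (HN N (Nat.le_refl N)).
    assert (C / (1 - q) * q ^ N < e / 2); [|lra].
    assert (0 <= q ^ N) by (apply pow_le; lra).
    apply Rmult_lt_compat_l with (r := 2 * C + 1) in HN; [|lra].
    replace ((2 * C + 1) * (e * (1 - q) / (2 * C + 1))) with (e * (1 - q)) in HN by (field; lra).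
    apply Rmult_lt_reg_r with (2 * (1 - q)); [lra|].
    replace (C / (1 - q) * q ^ N * (2 * (1 - q))) with (2 * C * q ^ N) by (field; lra). nra. }
  exists l. intro n. apply Rle_plus_epsilon. intros e He.
  destruct (Hl e He) as [N HN].
  eapply Rle_trans; [apply (hnorm_sub_le _ (u (max n N)))|].
  apply Rplus_le_compat; [apply Hb; lia | left; apply HN; lia].
Qed.

Lemma geometric_limit_map (L : H -> H) (u : nat -> H) (l b : H) (K K' : R) :
  (forall x y, L (hsub x y) = hsub (L x) (L y)) -> (forall x, hnorm (L x) <= hnorm x) ->
  (forall n, hnorm (hsub (u n) l) <= K * q ^ n) ->
  (forall n, hnorm (hsub (L (u n)) b) <= K' * q ^ n) ->
  L l = b.
Proof.
  intros Lsub Lcontr Hu HLu.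
  apply eq_of_hnorm_sub_le0. apply (le0_of_le_geometric _ (K + K') q hq). intro n.
  eapply Rle_trans; [apply (hnorm_sub_le _ (L (u n)))|].
  rewrite <- Lsub.
  pose proof (Lcontr (hsub l (u n))). specialize (Hu n). specialize (HLu n).
  rewrite hnorm_subC in Hu. lra.
Qed.

End GeometricLimits.

(* The paper's [(P_F P_G)|_F]: it is only ever applied to vectors with [P x = x]. *)
Definition compression {H : HilbertSpace} (P Q : H -> H) (x : H) : H := P (Q x).

Definition compression_shift {H : HilbertSpace} (P Q : H -> H) (lam : R) (x : H) : H :=
  hsub (compression P Q x) (hscal lam x).

Definition approx_eigen {H : HilbertSpace} (P Q : H -> H) (lam : R) : Prop :=
  forall e, 0 < e -> exists x, P x = x /\
    hinner (compression_shift P Q lam x) (compression_shift P Q lam x) < e * hinner x x.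

Section Compression.
Context {H : HilbertSpace} {M N : H -> Prop} {P Q : H -> H}.
Hypotheses (hP : orth_projector M P) (hQ : orth_projector N Q).
Local Notation A := (compression P Q).
Implicit Types x y z : H.

Lemma compression_add x y : A (hadd x y) = hadd (A x) (A y).
Proof. unfold compression. rewrite (proj_add hQ), (proj_add hP). auto. Qed.

Lemma compression_scal a x : A (hscal a x) = hscal a (A x).
Proof. unfold compression. rewrite (proj_scal hQ), (proj_scal hP). auto. Qed.

Lemma compression_sub x y : A (hsub x y) = hsub (A x) (A y).
Proof. unfold compression. rewrite (proj_sub hQ), (proj_sub hP). auto. Qed.

Lemma compression_zero : A hzero = hzero.
Proof. unfold compression. rewrite (proj_zero hQ), (proj_zero hP). auto. Qed.

Lemma compression_range x : P (A x) = A x.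
Proof. apply (proj_idem hP). Qed.

Lemma compression_sym x z : P x = x -> P z = z -> hinner (A x) z = hinner x (A z).
Proof.
  intros Hx Hz. unfold compression.
  rewrite (proj_sym hP), Hz, (proj_sym hQ), <- (proj_sym hP x (Q z)), Hx. auto.
Qed.

Lemma compression_form x : P x = x -> hinner (A x) x = hinner (Q x) (Q x).
Proof. intros Hx. unfold compression. rewrite (proj_sym hP), Hx, (proj_sq hQ). auto. Qed.

Lemma compression_form_nonneg x : P x = x -> 0 <= hinner (A x) x.
Proof. intros Hx. rewrite compression_form by auto. apply hinner_pos. Qed.

Lemma compression_sq_le_form x : P x = x -> hinner (A x) (A x) <= hinner (A x) x.
Proof. intros Hx. rewrite compression_form by auto. apply (proj_inner_le hP). Qed.

Lemma compression_hnorm_le x : hnorm (A x) <= hnorm x.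
Proof.
  unfold compression. eapply Rle_trans; [apply (proj_hnorm_le hP) | apply (proj_hnorm_le hQ)].
Qed.

End Compression.

Section PositiveOperator.
Context {H : HilbertSpace} {M : H -> Prop} {P : H -> H}.
Hypothesis hP : orth_projector M P.
Variables (B : H -> H) (K : R).
Hypotheses (hK : 0 <= K)
  (B_range : forall y, P y = y -> P (B y) = B y)
  (B_add : forall y z, B (hadd y z) = hadd (B y) (B z))
  (B_scal : forall a y, B (hscal a y) = hscal a (B y))
  (B_sym : forall y z, P y = y -> P z = z -> hinner (B y) z = hinner y (B z))
  (B_psd : forall y, P y = y -> 0 <= hinner (B y) y)
  (B_bounded : forall y, P y = y -> hinner (B y) (B y) <= K * hinner y y).

Lemma positive_cauchy_schwarz y z : P y = y -> P z = z ->
  hinner (B y) z * hinner (B y) z <= hinner (B y) y * hinner (B z) z.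
Proof.
  intros Hy Hz. rewrite (Rmult_comm (hinner (B y) y)).
  apply discriminant_le; [apply B_psd; auto|].
  intro t. assert (Hyz : P (hadd y (hscal t z)) = hadd y (hscal t z)).
  { rewrite (proj_add hP), (proj_scal hP), Hy, Hz. auto. }
  pose proof (B_psd _ Hyz) as E. rewrite B_add, B_scal in E. inner_simpl_in E.
  rewrite (B_sym z y Hz Hy), (hinner_sym _ z (B y)) in E. nra.
Qed.

(* Small quadratic form forces a small image: [|Bu|^4 <= <Bu,u> <B(Bu),Bu> <= K <Bu,u>^2 |Bu|^2]. *)
Lemma positive_image_le u : P u = u -> hinner (B u) (B u) <= (K + 1) * hinner (B u) u.
Proof.
  intros Hu.
  set (X := hinner (B u) u). set (Y := hinner (B (B u)) (B u)). set (q := hinner (B u) (B u)).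
  assert (HX : 0 <= X) by (apply B_psd; auto).
  assert (HY : 0 <= Y) by (apply B_psd, B_range; auto).
  assert (Hq : 0 <= q) by apply hinner_pos.
  assert (Hq1 : q * q <= X * Y) by (apply (positive_cauchy_schwarz u (B u)); auto).
  assert (HY2 : Y * Y <= K * q * q).
  { pose proof (cauchy_schwarz (B (B u)) (B u)). pose proof (B_bounded (B u) (B_range u Hu)).
    pose proof (hinner_pos _ (B (B u))). unfold Y, q in *. nra. }
  assert (Hq2 : q * q <= K * X * X).
  { destruct (Req_dec q 0) as [h|h]; [rewrite h; nra|].
    apply Rmult_le_reg_r with (q * q); nra. }
  apply Rnot_lt_le. intro Hlt.
  assert ((K + 1) * X * ((K + 1) * X) < q * q) by (apply Rmult_le_0_lt_compat; nra).
  nra.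
Qed.

End PositiveOperator.

Section QuadraticSup.
Context {H : HilbertSpace}.
Variables (D : H -> Prop) (f : H -> R) (c : R).
Hypotheses (D_scal : forall a x, D x -> D (hscal a x))
  (f_scal : forall a x, f (hscal a x) = a * a * f x)
  (f_null : forall x, D x -> hinner x x = 0 -> f x <= 0)
  (f_bounded : forall u, D u -> hinner u u = 1 -> f u <= c).

Lemma quadratic_normalize y : D y -> 0 < hinner y y ->
  exists u, D u /\ hinner u u = 1 /\ f u = f y / hinner y y.
Proof.
  intros Hy Hyy. exists (hscal (/ sqrt (hinner y y)) y).
  assert (Hs : sqrt (hinner y y) * sqrt (hinner y y) = hinner y y) by (apply sqrt_sqrt; lra).
  assert (0 < sqrt (hinner y y)) by (apply sqrt_lt_R0; lra).
  set (s := sqrt (hinner y y)) in *.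
  split; [auto|split].
  - inner_simpl. rewrite <- Hs. field. lra.
  - rewrite f_scal, <- Hs. field. lra.
Qed.

Lemma quadratic_sup x : D x -> 0 < f x ->
  exists mu, 0 < mu <= c /\ (forall y, D y -> f y <= mu * hinner y y) /\
    (forall d, 0 < d -> exists u, D u /\ hinner u u = 1 /\ mu - d < f u).
Proof.
  intros Hx Hfx.
  assert (Hxx : 0 < hinner x x).
  { destruct (Rle_lt_dec (hinner x x) 0) as [h|h]; auto.
    pose proof (hinner_pos _ x). pose proof (f_null x Hx). lra. }
  set (E := fun r => exists u, D u /\ hinner u u = 1 /\ r = f u).
  destruct (quadratic_normalize x Hx Hxx) as [u0 [Hu0 [Hu0u0 Hfu0]]].
  destruct (completeness E) as [mu [Hub Hlub]].
  { exists c. intros r [u [Hu [Huu ->]]]. auto. }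
  { exists (f u0), u0. auto. }
  exists mu. split; [split|split].
  - assert (E (f u0)) as Eu0 by (exists u0; auto). apply Hub in Eu0.
    assert (0 < f x / hinner x x) by (apply Rdiv_lt_0_compat; auto). lra.
  - apply Hlub. intros r [u [Hu [Huu ->]]]. auto.
  - intros y Hy. destruct (Rle_lt_dec (hinner y y) 0) as [h|h].
    + pose proof (hinner_pos _ y). assert (Hyy : hinner y y = 0) by lra.
      rewrite Hyy. pose proof (f_null y Hy Hyy). lra.
    + destruct (quadratic_normalize y Hy h) as [u [Hu [Huu Hf]]].
      assert (E (f u)) as Eu by (exists u; auto). apply Hub in Eu. rewrite Hf in Eu.
      apply Rmult_le_compat_r with (r := hinner y y) in Eu; [|lra].
      replace (f y / hinner y y * hinner y y) with (f y) in Eu by (field; lra). lra.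
  - intros d Hd. apply NNPP. intro Hn.
    assert (mu <= mu - d); [|lra]. apply Hlub. intros r [u [Hu [Huu ->]]].
    apply Rnot_lt_le. intro. apply Hn. exists u. auto.
Qed.

End QuadraticSup.

Section SpectralGap.
Context {H : HilbertSpace} {M N : H -> Prop} {P Q : H -> H}.
Hypotheses (hP : orth_projector M P) (hQ : orth_projector N Q).
Local Notation A := (compression P Q).
Local Notation shift := (compression_shift P Q).
Implicit Types x y z : H.

Lemma compression_shift_range lam x : P x = x -> P (shift lam x) = shift lam x.
Proof.
  intros Hx. unfold compression_shift.
  rewrite (proj_sub hP), (proj_scal hP), (compression_range hP), Hx. auto.
Qed.

Lemma compression_shift_add lam x y : shift lam (hadd x y) = hadd (shift lam x) (shift lam y).
Proof. unfold compression_shift. rewrite (compression_add hP hQ). vec_ext. Qed.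

Lemma compression_shift_scal lam a x : shift lam (hscal a x) = hscal a (shift lam x).
Proof. unfold compression_shift. rewrite (compression_scal hP hQ). vec_ext. Qed.

Lemma compression_shift_sym lam x z : P x = x -> P z = z ->
  hinner (shift lam x) z = hinner x (shift lam z).
Proof.
  intros Hx Hz. unfold compression_shift. inner_simpl.
  rewrite (compression_sym hP hQ x z Hx Hz). ring.
Qed.

Lemma compression_shiftC a b x : shift a (shift b x) = shift b (shift a x).
Proof.
  unfold compression_shift. rewrite !(compression_sub hP hQ), !(compression_scal hP hQ). vec_ext.
Qed.

Lemma compression_shift_hnorm_le lam x : hnorm (shift lam x) <= (1 + Rabs lam) * hnorm x.
Proof.
  unfold compression_shift. eapply Rle_trans; [apply hnorm_sub_le_add|].
  rewrite hnorm_scal. pose proof (compression_hnorm_le hP hQ x). lra.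
Qed.

Lemma compression_shift2_form a b x : P x = x ->
  hinner (shift a (shift b x)) x
  = a * b * hinner x x - ((a + b) * hinner (A x) x - hinner (A x) (A x)).
Proof.
  intros Hx. unfold compression_shift.
  rewrite (compression_sub hP hQ), (compression_scal hP hQ). inner_simpl.
  rewrite (compression_sym hP hQ (A x) x (compression_range hP x) Hx). ring.
Qed.

(* The hypothesis says that [(A - a)(A - b) = A^2 - (a + b) A + a b] is positive. *)
Lemma compression_shift2_image_le a b :
  (forall y, P y = y -> (a + b) * hinner (A y) y - hinner (A y) (A y) <= a * b * hinner y y) ->
  forall u, P u = u ->
  hinner (shift a (shift b u)) (shift a (shift b u))
  <= (((1 + Rabs a) * (1 + Rabs b)) ^ 2 + 1) * hinner (shift a (shift b u)) u.
Proof.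
  intros Hform u Hu.
  apply (positive_image_le hP (fun y => shift a (shift b y))); 
    [pose proof (pow2_ge_0 ((1 + Rabs a) * (1 + Rabs b))); lra| | | | | | | exact Hu].
  - intros y Hy. apply compression_shift_range, compression_shift_range, Hy.
  - intros y z. rewrite !compression_shift_add. auto.
  - intros c y. rewrite !compression_shift_scal. auto.
  - intros y z Hy Hz.
    rewrite (compression_shift_sym a), (compression_shift_sym b), (compression_shiftC a b z);
      auto using compression_shift_range.
  - intros y Hy. rewrite compression_shift2_form by auto. specialize (Hform y Hy). lra.
  - intros y Hy. rewrite <- !hnorm_sq.
    assert (Hb : hnorm (shift b y) <= (1 + Rabs b) * hnorm y)
      by apply compression_shift_hnorm_le.
    assert (Hab : hnorm (shift a (shift b y)) <= (1 + Rabs a) * ((1 + Rabs b) * hnorm y)).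
    { eapply Rle_trans; [apply compression_shift_hnorm_le|].
      apply Rmult_le_compat_l; [pose proof (Rabs_pos a); lra | exact Hb]. }
    pose proof (hnorm_nonneg (shift a (shift b y))).
    replace (((1 + Rabs a) * (1 + Rabs b)) ^ 2 * hnorm y ^ 2)
      with (((1 + Rabs a) * ((1 + Rabs b) * hnorm y)) ^ 2) by ring.
    apply pow_incr. lra.
Qed.

Lemma approx_eigen_of_product (a b : R) :
  (forall e, 0 < e -> exists u, P u = u /\ hinner u u = 1 /\
     hinner (shift a (shift b u)) (shift a (shift b u)) < e) ->
  ~ approx_eigen P Q b -> approx_eigen P Q a.
Proof.
  intros Happrox Hb e He.
  apply not_all_ex_not in Hb. destruct Hb as [e0 He0].
  apply imply_to_and in He0. destruct He0 as [He0 Hno].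
  destruct (Happrox (e * e0)) as [u [Hu [Huu Hsmall]]]; [nra|].
  exists (shift b u). split; [apply compression_shift_range; auto|].
  assert (Hlow : e0 * hinner u u <= hinner (shift b u) (shift b u)).
  { apply Rnot_lt_le. intro hlt. apply Hno. exists u. auto. }
  rewrite Huu, Rmult_1_r in Hlow.
  apply Rmult_le_compat_l with (r := e) in Hlow; lra.
Qed.

(* If the positive approximate eigenvalues of [A] are at least [k], the spectrum of [A] lies in
   [{0} U [k, 1]], i.e. [k A <= A^2].  Otherwise [mu := sup (k A - A^2) > 0] on the unit sphere
   and [(A - l1)(A - l2) = A^2 - k A + mu] is positive with an approximate kernel, where
   [0 < l1 <= l2 < k] are the roots of [t^2 - k t + mu]; so [l1] or [l2] would be an
   approximate eigenvalue below [k]. *)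
Lemma spectral_gap (k : R) : 0 < k ->
  (forall lam, 0 < lam -> approx_eigen P Q lam -> k <= lam) ->
  forall x, P x = x -> k * hinner (A x) x <= hinner (A x) (A x).
Proof.
  intros hk gap x Hx. apply Rnot_lt_le. intro Hneg.
  set (f := fun y => k * hinner (A y) y - hinner (A y) (A y)).
  destruct (quadratic_sup (fun y => P y = y) f (k * k / 4)) with x
    as [mu [[mu_pos mu_le] [fle fnear]]]; unfold f; auto; try lra.
  - intros a y Hy. rewrite (proj_scal hP), Hy. auto.
  - intros a y. rewrite (compression_scal hP hQ). inner_simpl. ring.
  - intros y Hy Hyy. pose proof (cauchy_schwarz (A y) y) as CS. rewrite Hyy in CS.
    pose proof (hinner_pos _ (A y)). nra.
  - intros u Hu Huu. pose proof (cauchy_schwarz (A u) u) as CS. rewrite Huu in CS.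
    pose proof (Rle_0_sqr (hinner (A u) u - k / 2)). unfold Rsqr in *. nra.
  - set (d := k * k - 4 * mu).
    assert (Hsd : sqrt d < k).
    { rewrite <- (sqrt_pow2 k) by lra. apply sqrt_lt_1_alt. unfold d. simpl. lra. }
    assert (Hs : sqrt d * sqrt d = d) by (apply sqrt_sqrt; unfold d; lra).
    pose proof (sqrt_pos d).
    set (l1 := (k - sqrt d) / 2). set (l2 := (k + sqrt d) / 2).
    assert (Hsum : l1 + l2 = k) by (unfold l1, l2; field).
    assert (Hprod : l1 * l2 = mu).
    { unfold l1, l2. replace ((k - sqrt d) / 2 * ((k + sqrt d) / 2))
        with ((k * k - sqrt d * sqrt d) / 4) by field.
      rewrite Hs. unfold d. field. }
    unfold f in fle, fnear. rewrite <- Hsum, <- Hprod in fle, fnear.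
    set (K := ((1 + Rabs l1) * (1 + Rabs l2)) ^ 2 + 1).
    assert (HK : 0 < K) by (unfold K; pose proof (pow2_ge_0 ((1 + Rabs l1) * (1 + Rabs l2))); lra).
    assert (AE1 : approx_eigen P Q l1).
    { apply approx_eigen_of_product with l2.
      - intros e He.
        destruct (fnear (e / K)) as [u [Hu [Huu Hfu]]]; [apply Rdiv_lt_0_compat; lra|].
        exists u. split; [auto|split; [auto|]].
        eapply Rle_lt_trans; [apply compression_shift2_image_le; auto|].
        rewrite compression_shift2_form, Huu by auto. fold K.
        apply Rmult_lt_compat_l with (r := K) in Hfu; [|lra].
        replace (K * (l1 * l2 - e / K)) with (K * (l1 * l2) - e) in Hfu by (field; lra).
        lra.
      - intro Hae. specialize (gap l2 ltac:(unfold l2; lra) Hae). unfold l2 in gap. lra. }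
    specialize (gap l1 ltac:(unfold l1; lra) AE1). unfold l1 in gap. lra.
Qed.

End SpectralGap.

Section ApproxEigen.
Context {H : HilbertSpace} {M N : H -> Prop} {P Q : H -> H}.
Hypotheses (hP : orth_projector M P) (hQ : orth_projector N Q).

(* A bounded inverse [C] of [A - lam] gives [|x| <= K |(A - lam) x|], against approximate
   eigenvectors with defect below [1 / (K^2 + 1)]. *)
Lemma approx_eigen_spectrum lam : approx_eigen P Q lam -> in_spectrum_on M (fun x => P (Q x)) lam.
Proof.
  intros Hae [C [_ [HC [_ [K HK]]]]].
  assert (He : 0 < / (K * K + 1)) by (apply Rinv_0_lt_compat; nra).
  destruct (Hae _ He) as [x [Hx Hsmall]].
  set (r := compression_shift P Q lam x) in Hsmall.
  assert (Mx : M x) by (rewrite <- Hx; apply hP).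
  assert (Mr : M r) by (unfold r; rewrite <- (compression_shift_range hP lam x Hx); apply hP).
  specialize (HK r Mr). unfold r, compression_shift, compression in HK.
  rewrite (HC x Mx) in HK. fold (compression P Q x) (compression_shift P Q lam x) r in HK.
  assert (Hxr : hinner x x <= K * K * hinner r r).
  { rewrite <- (hnorm_sq x), <- (hnorm_sq r).
    pose proof (hnorm_nonneg x). simpl. nra. }
  pose proof (hinner_pos _ r). pose proof (hinner_pos _ x).
  assert (Hxx : 0 < hinner x x) by nra.
  apply Rmult_lt_compat_l with (r := K * K + 1) in Hsmall; [|nra].
  replace ((K * K + 1) * (/ (K * K + 1) * hinner x x)) with (hinner x x) in Hsmall
    by (field; nra).
  nra.
Qed.

(* [Q x] is an approximate eigenvector of the compression [Q P] on the range of [Q],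
   since [|Q x|] is bounded below by [lam |x| / 2] up to the defect. *)
Lemma approx_eigen_swap lam : 0 < lam -> approx_eigen P Q lam -> approx_eigen Q P lam.
Proof.
  intros Hl Hae e He.
  set (dl := Rmin (lam * lam / 4) (e * (lam * lam) / 4)).
  assert (Hll : 0 < lam * lam) by nra.
  assert (Hdl : 0 < dl) by (unfold dl; apply Rmin_pos; apply Rdiv_lt_0_compat; nra).
  destruct (Hae dl Hdl) as [x [Hx Hr]].
  unfold compression_shift, compression in *.
  set (r := hsub (P (Q x)) (hscal lam x)) in *.
  exists (Q x). split; [apply (proj_idem hQ)|].
  replace (hsub (Q (P (Q x))) (hscal lam (Q x))) with (Q r)
    by (unfold r; rewrite (proj_sub hQ), (proj_scal hQ); auto).
  pose proof (proj_inner_le hQ r) as HQr.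
  assert (Hlx : lam * lam * hinner x x <= 2 * hinner (P (Q x)) (P (Q x)) + 2 * hinner r r).
  { pose proof (hinner_pos _ (hadd (P (Q x)) r)) as E.
    assert (Ex : hscal lam x = hsub (P (Q x)) r) by (unfold r; vec_ext).
    assert (Hsq := f_equal (fun v => hinner v v) Ex). simpl in Hsq. inner_simpl_in Hsq.
    inner_simpl_in E. rewrite (hinner_sym _ r (P (Q x))) in *. nra. }
  pose proof (proj_inner_le hP (Q x)) as HPQx.
  pose proof (Rmin_l (lam * lam / 4) (e * (lam * lam) / 4)) as Hdl1.
  pose proof (Rmin_r (lam * lam / 4) (e * (lam * lam) / 4)) as Hdl2. fold dl in Hdl1, Hdl2.
  pose proof (hinner_pos _ x). pose proof (hinner_pos _ r).
  assert (lam * lam * hinner x x <= 4 * hinner (Q x) (Q x)).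
  { assert (dl * hinner x x <= lam * lam / 4 * hinner x x) by (apply Rmult_le_compat_r; lra). nra. }
  assert (dl * hinner x x <= e * hinner (Q x) (Q x)).
  { assert (dl * hinner x x <= e * (lam * lam) / 4 * hinner x x) by (apply Rmult_le_compat_r; lra).
    nra. }
  lra.
Qed.

End ApproxEigen.

Lemma acos_le_PI2 s : 0 <= s -> acos s <= PI / 2.
Proof.
  intros Hs. pose proof PI_RGT_0. destruct (Rle_lt_dec 1 s) as [h|h].
  - unfold acos. destruct (Rle_dec s (-1)); [lra|]. destruct (Rle_dec 1 s); lra.
  - apply Rnot_lt_le. intro Hlt. pose proof (acos_bound s).
    pose proof (cos_decreasing_1 (PI / 2) (acos s) ltac:(lra) ltac:(lra) ltac:(lra) ltac:(lra) Hlt)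
      as Hcos.
    rewrite cos_acos, cos_PI2 in Hcos by lra. lra.
Qed.

Section ThetaMax.
Context {H : HilbertSpace} {Ssp Tsp : H -> Prop} {S T : H -> H}.
Hypotheses (hPS : orth_projector Ssp S) (hPT : orth_projector Tsp T).
Variable tmax : R.
Hypothesis htmax : is_theta_max Ssp Tsp S T tmax.

Lemma theta_max_le_PI2 : tmax <= PI / 2.
Proof.
  destruct htmax as [[_ ->] | [_ [_ Hlub]]]; [pose proof PI2_RGT_0; lra|].
  apply Hlub. intros t [[[s [Hs [_ ->]]] _] _]. apply acos_le_PI2, Hs.
Qed.

(* [acos (sqrt lam)] is a principal angle between [S] and [T] (it lies in both one-sided sets by
   [approx_eigen_swap]), different from [PI / 2], hence at most [tmax]. *)
Lemma cos_theta_max_sq_le lam : 0 < lam -> approx_eigen S T lam -> cos tmax ^ 2 <= lam.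
Proof.
  intros Hl Hae.
  set (sg := sqrt lam).
  assert (Hsg : sg ^ 2 = lam) by (apply pow2_sqrt; lra).
  assert (Hsg0 : 0 < sg) by (apply sqrt_lt_R0; lra).
  pose proof (COS_bound tmax).
  destruct (Rle_lt_dec 1 sg) as [h1|h1]; [rewrite <- Hsg; simpl; nra|].
  set (th := acos sg).
  assert (Hcs : cos th = sg) by (apply cos_acos; lra).
  assert (Hth : Theta Ssp Tsp S T th /\ th <> PI / 2).
  { split; [split; exists sg; repeat split; try lra|].
    - rewrite Hsg. apply (approx_eigen_spectrum hPS); auto.
    - rewrite Hsg. apply (approx_eigen_spectrum hPT), (approx_eigen_swap hPS hPT); auto.
    - intro E. rewrite E, cos_PI2 in Hcs. lra. }
  assert (Hle : th <= tmax).
  { destruct htmax as [[Hemp _] | [_ [Hub _]]]; [exfalso; apply (Hemp th Hth) | apply Hub, Hth]. }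
  pose proof theta_max_le_PI2. pose proof (acos_bound sg) as Hbound. fold th in Hbound.
  pose proof PI_RGT_0.
  assert (cos tmax <= sg) by (rewrite <- Hcs; apply cos_decr_1; lra).
  assert (0 <= cos tmax) by (apply cos_ge_0; lra).
  rewrite <- Hsg. simpl. nra.
Qed.

End ThetaMax.

Fixpoint half_steps {H : HilbertSpace} (A : H -> H) (s : H) (n : nat) : H :=
  match n with
  | O => s
  | Datatypes.S m => hsub (half_steps A s m) (hscal (1/2) (A (half_steps A s m)))
  end.

(* [A (half_step_sums u l n) = s - u n] when [u = half_steps A s] and [A l = 0]. *)
Fixpoint half_step_sums {H : HilbertSpace} (u : nat -> H) (l : H) (n : nat) : H :=
  match n with
  | O => hzero
  | Datatypes.S m => hadd (half_step_sums u l m) (hscal (1/2) (hsub (u m) l))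
  end.

Section Decomposition.
Context {H : HilbertSpace} {M N : H -> Prop} {P Q : H -> H}.
Hypotheses (hP : orth_projector M P) (hQ : orth_projector N Q).
Local Notation A := (compression P Q).
Variable k : R.
Hypothesis hk : 0 < k <= 1.
Hypothesis gap : forall x, P x = x -> k * hinner (A x) x <= hinner (A x) (A x).
Implicit Types x y z u : H.

Let Asub := compression_sub hP hQ.
Let Ascal := compression_scal hP hQ.
Let Arange : forall x, P (A x) = A x := compression_range hP.
Let Asym := compression_sym hP hQ.

Lemma range_sub x y : P x = x -> P y = y -> P (hsub x y) = hsub x y.
Proof. intros Hx Hy. rewrite (proj_sub hP), Hx, Hy. auto. Qed.

Lemma range_scal a x : P x = x -> P (hscal a x) = hscal a x.
Proof. intros Hx. rewrite (proj_scal hP), Hx. auto. Qed.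

(* On the spectrum [{0} U [k, 1]] the map [t -> t (1 - t / 2)] is at most [(1 - k / 2) t]. *)
Lemma half_step_contract u : P u = u ->
  hinner (A (hsub u (hscal (1/2) (A u)))) (A (hsub u (hscal (1/2) (A u))))
  <= (1 - k / 2) * (1 - k / 2) * hinner (A u) (A u).
Proof.
  intros Hu. rewrite Asub, Ascal.
  set (y1 := A u). set (y2 := A y1).
  pose proof (gap u Hu) as F0. fold y1 in F0.
  set (w := hsub y1 (hscal k u)).
  assert (Hw : P w = w) by (apply range_sub; [apply Arange | apply range_scal, Hu]).
  assert (Ew : A w = hsub y2 (hscal k y1)) by (unfold w; rewrite Asub, Ascal; auto).
  pose proof (compression_form_nonneg hP hQ w Hw) as F1.
  pose proof (compression_sq_le_form hP hQ w Hw) as F2.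
  rewrite Ew in F1, F2. unfold w in F1, F2.
  assert (S1 : hinner y2 u = hinner y1 y1) by (apply Asym; [apply Arange | apply Hu]).
  inner_simpl. inner_simpl_in F1. inner_simpl_in F2.
  rewrite ?(hinner_sym _ u y1), ?(hinner_sym _ u y2), ?(hinner_sym _ y1 y2), ?S1 in *.
  pose proof (Rmult_le_pos (3 - 2 * k) _ ltac:(lra) F1).
  pose proof (Rmult_le_pos (2 * k - k * k) (hinner y1 y1 - k * hinner y1 u) ltac:(nra) ltac:(lra)).
  lra.
Qed.

(* On the spectrum: [k^2 (t - t^2) <= t^2 (t - t^2)]. *)
Lemma compression_defect_le y : P y = y ->
  k * k * (hinner (A y) y - hinner (A y) (A y))
  <= hinner (A (A y)) (A y) - hinner (A (A y)) (A (A y)).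
Proof.
  intros Hu.
  set (y1 := A y). set (y2 := A y1).
  assert (S1 : hinner y2 y = hinner y1 y1) by (apply Asym; [apply Arange | apply Hu]).
  assert (Hw : P (hsub y y1) = hsub y y1) by (apply range_sub; [apply Hu | apply Arange]).
  pose proof (gap _ Hw) as F1. rewrite Asub in F1. fold y1 y2 in F1.
  set (z := hsub y1 (hscal k y)).
  assert (Hz : P z = z) by (apply range_sub; [apply Arange | apply range_scal, Hu]).
  assert (Ez : A z = hsub y2 (hscal k y1)) by (unfold z; rewrite Asub, Ascal; auto).
  pose proof (compression_sq_le_form hP hQ z Hz) as F2. rewrite Ez in F2. unfold z in F2.
  pose proof (compression_sq_le_form hP hQ y1 (Arange y)) as F3. fold y2 in F3.
  pose proof (gap y Hu) as F4. fold y1 in F4.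
  inner_simpl_in F1. inner_simpl_in F2.
  rewrite ?(hinner_sym _ y y1), ?(hinner_sym _ y y2), ?(hinner_sym _ y1 y2), ?S1 in *.
  destruct (Req_dec k 1) as [e|e]; [subst k; lra|].
  assert (Hid : (1 - k) * (hinner y2 y1 - hinner y2 y2 - k * k * (hinner y1 y - hinner y1 y1)) =
     2 * k * (hinner y1 y1 - 2 * hinner y2 y1 + hinner y2 y2
              - k * (hinner y1 y - 2 * hinner y1 y1 + hinner y2 y1))
     + (1 + k) * ((hinner y2 y1 - 2 * k * hinner y1 y1 + k * k * hinner y1 y)
                  - (hinner y2 y2 - 2 * k * hinner y2 y1 + k * k * hinner y1 y1)))
    by ring.
  assert (0 <= (1 - k) * (hinner y2 y1 - hinner y2 y2 - k * k * (hinner y1 y - hinner y1 y1)))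
    by (rewrite Hid; nra).
  assert (0 < 1 - k) by lra.
  nra.
Qed.

Lemma half_steps_range s n : P s = s -> P (half_steps A s n) = half_steps A s n.
Proof.
  intros Hs. induction n as [|n IH]; simpl; [exact Hs|].
  apply range_sub; [exact IH | apply range_scal, Arange].
Qed.

Lemma half_steps_hnorm_le s n : P s = s ->
  hnorm (A (half_steps A s n)) <= (1 - k / 2) ^ n * hnorm (A s).
Proof.
  intros Hs. pose proof (hnorm_nonneg (A s)).
  induction n as [|n IH]; simpl; [lra|].
  assert (0 <= (1 - k / 2) ^ n) by (apply pow_le; lra).
  apply hnorm_le_of_sq; [apply Rmult_le_pos; [apply Rmult_le_pos|]; lra|].
  eapply Rle_trans; [apply half_step_contract, half_steps_range, Hs|].
  rewrite <- hnorm_sq.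
  assert (Hsq : hnorm (A (half_steps A s n)) ^ 2 <= ((1 - k / 2) ^ n * hnorm (A s)) ^ 2)
    by (apply pow_incr; split; [apply hnorm_nonneg | exact IH]).
  apply Rmult_le_compat_l with (r := (1 - k / 2) * (1 - k / 2)) in Hsq; [|nra].
  simpl in Hsq. lra.
Qed.

Lemma half_steps_limit s : P s = s ->
  exists l K, P l = l /\ A l = hzero /\
    forall n, hnorm (hsub (half_steps A s n) l) <= K * (1 - k / 2) ^ n.
Proof.
  intros Hs. set (q := 1 - k / 2). assert (Hq : 0 <= q < 1) by (unfold q; lra).
  set (u := half_steps A s).
  pose proof (hnorm_nonneg (A s)).
  destruct (geometric_limit q Hq u (1/2 * hnorm (A s))) as [l Hl]; [lra|..].
  { intro n. unfold u at 2. simpl. fold (u n).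
    replace (hsub (u n) (hsub (u n) (hscal (1/2) (A (u n))))) with (hscal (1/2) (A (u n)))
      by vec_ext.
    rewrite hnorm_scal, Rabs_pos_eq by lra.
    pose proof (half_steps_hnorm_le s n Hs) as Hn. fold q u in Hn. nra. }
  exists l, (1/2 * hnorm (A s) / (1 - q)). split; [|split]; auto.
  - apply (geometric_limit_map q Hq P u l l _ (1/2 * hnorm (A s) / (1 - q))
      (proj_sub hP) (proj_hnorm_le hP) Hl).
    intro n. unfold u. rewrite half_steps_range by auto. apply Hl.
  - apply (geometric_limit_map q Hq A u l hzero _ (hnorm (A s)) Asub
      (compression_hnorm_le hP hQ) Hl).
    intro n. replace (hsub (A (u n)) hzero) with (A (u n)) by vec_ext.
    rewrite Rmult_comm. apply half_steps_hnorm_le, Hs.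
Qed.

(* [ran A] is closed and complements [ker A] in the range of [P]: [s - l] is the limit of
   [A (half_step_sums u l n) = s - u n]. *)
Lemma compression_range_decomposition s : P s = s ->
  exists n y, P n = n /\ A n = hzero /\ P y = y /\ A y = hsub s n.
Proof.
  intros Hs. set (q := 1 - k / 2). assert (Hq : 0 <= q < 1) by (unfold q; lra).
  destruct (half_steps_limit s Hs) as [l [K [Pl [Al Hl]]]]. fold q in Hl.
  set (u := half_steps A s) in Hl. set (v := half_step_sums u l).
  assert (Hv : forall n, P (v n) = v n).
  { induction n as [|n IH]; [apply (proj_zero hP)|].
    change (v (Datatypes.S n)) with (hadd (v n) (hscal (1/2) (hsub (u n) l))).
    rewrite (proj_add hP), IH, range_scal; auto.
    apply range_sub; [apply half_steps_range, Hs | apply Pl]. }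
  assert (HAv : forall n, A (v n) = hsub s (u n)).
  { induction n as [|n IH].
    - change (v 0%nat) with (@hzero H). change (u 0%nat) with s.
      rewrite (compression_zero hP hQ). vec_ext.
    - change (v (Datatypes.S n)) with (hadd (v n) (hscal (1/2) (hsub (u n) l))).
      change (u (Datatypes.S n)) with (hsub (u n) (hscal (1/2) (A (u n)))).
      rewrite (compression_add hP hQ), Ascal, Asub, Al, IH. vec_ext. }
  assert (HK : 0 <= K) by (pose proof (hnorm_nonneg (hsub (u 0%nat) l)); specialize (Hl 0%nat); simpl in Hl; lra).
  destruct (geometric_limit q Hq v (1/2 * K)) as [y Hy]; [lra| |].
  { intro n. unfold v at 2. simpl. fold (v n).
    replace (hsub (v n) (hadd (v n) (hscal (1/2) (hsub (u n) l)))) with (hscal (1/2) (hsub l (u n)))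
      by vec_ext.
    rewrite hnorm_scal, Rabs_pos_eq, hnorm_subC by lra. specialize (Hl n). lra. }
  exists l, y. split; [|split; [|split]]; auto.
  - apply (geometric_limit_map q Hq P v y y _ (1/2 * K / (1 - q))
      (proj_sub hP) (proj_hnorm_le hP) Hy).
    intro n. rewrite Hv. apply Hy.
  - apply (geometric_limit_map q Hq A v y (hsub s l) _ K Asub (compression_hnorm_le hP hQ) Hy).
    intro n. rewrite HAv.
    replace (hsub (hsub s (u n)) (hsub s l)) with (hsub l (u n)) by vec_ext.
    rewrite hnorm_subC. apply Hl.
Qed.

End Decomposition.

Section Reconstruction.
Context {H : HilbertSpace} {Ssp Tsp : H -> Prop} {S T : H -> H}.
Hypotheses (hPS : orth_projector Ssp S) (hPT : orth_projector Tsp T).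
Local Notation A := (compression S T).
Implicit Types g h x y : H.

Lemma compression_kernel x : S x = x -> A x = hzero -> T x = hzero.
Proof.
  intros Hx Ax. apply hinner_def.
  rewrite <- (compression_form hPS hPT x Hx), Ax. apply inner_zero_l.
Qed.

(* The difference [h] of two consistent reconstructions satisfies [S h = 0] and
   [S^perp T^perp h = 0]; then [h - T h] lies in [S] and is orthogonal to [h], so [h = T h]. *)
Lemma consistent_sub f g1 g2 : consistent S T f g1 -> consistent S T f g2 ->
  S (hsub g1 g2) = hzero /\ T (hsub g1 g2) = hsub g1 g2.
Proof.
  intros [Hc1 Hs1] [Hc2 Hs2]. set (h := hsub g1 g2).
  assert (Sh : S h = hzero) by (unfold h; rewrite (proj_sub hPS), Hs1, Hs2; vec_ext).
  split; [exact Sh|].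
  set (w := hsub h (T h)).
  assert (Sw : S w = w).
  { apply inner_ext. intro z.
    assert (E : hsub w (S w) = hsub (compl S (compl T g1)) (compl S (compl T g2))).
    { unfold w, h, compl. rewrite !(proj_sub hPS), !(proj_sub hPT), !(proj_sub hPS). vec_ext. }
    rewrite Hc1, Hc2 in E.
    assert (Ez := f_equal (fun v => hinner v z) E). simpl in Ez. inner_simpl_in Ez. lra. }
  assert (ww : hinner w w = 0).
  { assert (E1 : hinner w (T h) = 0) by (apply (proj2 (hPT h)), hPT).
    assert (E2 : hinner h w = 0) by (rewrite <- Sw, <- (proj_sym hPS), Sh; apply inner_zero_l).
    unfold w at 1. rewrite inner_sub_l, (hinner_sym _ (T h) w), E1, E2. ring. }
  apply hinner_def in ww. apply inner_ext. intro z.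
  assert (Ez := f_equal (fun v => hinner v z) ww). simpl in Ez.
  unfold w in Ez. inner_simpl_in Ez. lra.
Qed.

Variables (f n y : H).
Hypotheses (Sn : S n = n) (An : A n = hzero) (Sy : S y = y) (Ay : A y = hsub (S f) n).

Let fh := hadd n (T y).

Lemma reconstruction_consistent : consistent S T f fh.
Proof.
  pose proof (compression_kernel n Sn An) as Tn. unfold consistent, compl, fh. split.
  - rewrite (proj_add hPT), Tn, (proj_idem hPT).
    replace (hsub (hadd n (T y)) (hadd hzero (T y))) with n by vec_ext.
    rewrite Sn. vec_ext.
  - rewrite (proj_add hPS), Sn. change (S (T y)) with (A y). rewrite Ay. vec_ext.
Qed.

Lemma reconstruction_orthogonal g : consistent S T f g ->
  hinner g g = hinner fh fh + hinner (hsub g fh) (hsub g fh).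
Proof.
  intros Hg. set (h := hsub g fh).
  destruct (consistent_sub f g fh Hg reconstruction_consistent) as [Sh Th]. fold h in Sh, Th.
  assert (fhh : hinner fh h = 0).
  { unfold fh. inner_simpl.
    rewrite <- Sn at 1. rewrite (proj_sym hPS), Sh, inner_zero_r.
    rewrite (proj_sym hPT), Th, <- Sy, (proj_sym hPS), Sh, inner_zero_r. ring. }
  replace g with (hadd fh h) at 1 2 by (unfold h; vec_ext).
  inner_simpl. rewrite (hinner_sym _ h fh), fhh. ring.
Qed.

Lemma reconstruction_normal :
  normal_consistent S T f fh /\ forall g, normal_consistent S T f g -> g = fh.
Proof.
  split; [split; [apply reconstruction_consistent|] |].
  - intros g Hg. apply sqrt_le_1_alt. rewrite (reconstruction_orthogonal g Hg).
    pose proof (hinner_pos _ (hsub g fh)). lra.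
  - intros g [Hg Hmin]. specialize (Hmin fh reconstruction_consistent).
    pose proof (reconstruction_orthogonal g Hg).
    assert (hinner g g <= hinner fh fh) by (apply sqrt_le_0; auto using hinner_pos).
    apply eq_of_hnorm_sub_le0. unfold hnorm. rewrite <- sqrt_0. apply sqrt_le_1_alt. lra.
Qed.

Lemma reconstruction_inner :
  hinner fh fh = hinner (S f) (S f) + (hinner (A y) y - hinner (A y) (A y)).
Proof.
  pose proof (compression_kernel n Sn An) as Tn.
  assert (nTy : hinner n (T y) = 0) by (rewrite <- (proj_sym hPT), Tn; apply inner_zero_l).
  assert (nAy : hinner n (A y) = 0)
    by (rewrite <- (compression_sym hPS hPT n y Sn Sy), An; apply inner_zero_l).
  replace (S f) with (hadd n (A y)) by (rewrite Ay; vec_ext).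
  unfold fh. inner_simpl. rewrite (compression_form hPS hPT y Sy).
  rewrite (hinner_sym _ (T y) n), nTy, (hinner_sym _ (A y) n), nAy. ring.
Qed.

Lemma compl_compl_inner :
  hinner (compl S (compl T (S f))) (compl S (compl T (S f)))
  = hinner (A (A y)) (A y) - hinner (A (A y)) (A (A y)).
Proof.
  pose proof (compression_kernel n Sn An) as Tn.
  set (z := A y). assert (Sz : S z = z) by apply (compression_range hPS).
  replace (compl S (compl T (S f))) with (hsub (A z) (T z)).
  - assert (E : hinner (A z) (T z) = hinner (A z) (A z))
      by (symmetry; apply (proj_sq hPS (T z))).
    pose proof (compression_form hPS hPT z Sz) as F.
    inner_simpl. rewrite (hinner_sym _ (T z) (A z)), E, <- F. ring.
  - unfold compl. replace (S f) with (hadd n z) by (unfold z; rewrite Ay; vec_ext).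
    rewrite (proj_add hPT), Tn, (proj_sub hPS), !(proj_add hPS), Sn, Sz, (proj_zero hPS).
    change (S (T z)) with (A z). vec_ext.
Qed.

End Reconstruction.

Theorem theorem7 (H : HilbertSpace) (Ssp Tsp : H -> Prop) (S T : H -> H)
  (hS : closed_subspace Ssp) (hT : closed_subspace Tsp)
  (hPS : orth_projector Ssp S) (hPT : orth_projector Tsp T)
  (tmax : R) (htmax : is_theta_max Ssp Tsp S T tmax)
  (hcos : 0 < cos tmax) :
  (forall f : H, exists fh : H, consistent S T f fh) /\
  (forall f : H, exists fn : H,
     normal_consistent S T f fn /\
     (forall g, normal_consistent S T f g -> g = fn) /\
     hnorm fn ^ 2 <= hnorm (S f) ^ 2
                     + hnorm (compl S (compl T (S f))) ^ 2 / cos tmax ^ 4).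
Proof.
  pose proof (COS_bound tmax).
  set (k := cos tmax ^ 2).
  assert (hk : 0 < k <= 1) by (unfold k; split; nra).
  pose proof (spectral_gap hPS hPT k (proj1 hk) (cos_theta_max_sq_le hPS hPT tmax htmax)) as gap.
  assert (Hnormal : forall f, exists fn,
     normal_consistent S T f fn /\ (forall g, normal_consistent S T f g -> g = fn) /\
     hnorm fn ^ 2 <= hnorm (S f) ^ 2 + hnorm (compl S (compl T (S f))) ^ 2 / cos tmax ^ 4).
  { intro f.
    destruct (compression_range_decomposition hPS hPT k hk gap (S f) (proj_idem hPS f))
      as [n [y [Sn [An [Sy Ay]]]]].
    exists (hadd n (T y)).
    destruct (reconstruction_normal hPS hPT f n y Sn An Sy Ay) as [Hn Huniq].
    split; [exact Hn | split; [exact Huniq|]].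
    rewrite !hnorm_sq, (reconstruction_inner hPS hPT f n y Sn An Sy Ay),
      (compl_compl_inner hPS hPT f n y Sn An Ay).
    pose proof (compression_defect_le hPS hPT k hk gap y Sy) as Hdefect.
    replace (cos tmax ^ 4) with (k * k) by (unfold k; ring).
    apply Rplus_le_compat_l, Rmult_le_reg_l with (k * k); [nra|].
    unfold Rdiv. rewrite (Rmult_comm _ (/ (k * k))), <- Rmult_assoc, Rinv_r, Rmult_1_l by nra.
    exact Hdefect. }
  split; [|exact Hnormal].
  intro f. destruct (Hnormal f) as [fn [[Hc _] _]]. eauto.
Qed.
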